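(* Let $\langle B,\wedge,{}'\rangle$ be an algebra with $\wedge$ binary and ${}'$ unary satisfying $x\wedge y\approx y\wedge x$, $x\wedge(y\wedge z)\approx(x\wedge y)\wedge z$, $x''\approx x$, and $x'\approx (x\wedge y)'\wedge(x\wedge y')'$. Then for all $x,y,z\in B$, writing $0=z\wedge z'$, we have $0'\wedge[(x\wedge y)\wedge(x\wedge y)]'=[y\wedge(x\wedge y)]'$.
   Context: In such an algebra the element $z\wedge z'$ does not depend on $z$; the paper denotes it $0$. *)

(* Instantiating the axiom at [a'] and at [a] writes [a] and [a'] as meets of
   complements of [a'∧b], [a'∧b'], [a∧b], [a∧b']; this family is symmetric in
   [a] and [b], so [a ∧ a'] does not depend on [a]: it is a constant 0.  The
   axiom with [y := x] then reads [x' = (x∧x)' ∧ 0'], from which one gets that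
   [0'] is a unit for the meet and that the meet is idempotent; with these two
   facts both sides of the claim reduce to [(x∧y)']. *)

Section MeetComplementAlgebra.

Context {B : Type} {meet : B -> B -> B} {c : B -> B}.
Hypothesis meetC : forall x y, meet x y = meet y x.
Hypothesis meetA : forall x y z, meet x (meet y z) = meet (meet x y) z.
Hypothesis complK : forall x, c (c x) = x.
Hypothesis compl_meet_split :
  forall x y, c x = meet (c (meet x y)) (c (meet x (c y))).

Lemma meetCA x y z : meet x (meet y z) = meet y (meet x z).
Proof. rewrite meetA, (meetC x y), <- meetA. reflexivity. Qed.

Lemma meetACA x y z t : meet (meet x y) (meet z t) = meet (meet x z) (meet y t).
Proof. rewrite <- !meetA, (meetCA y z t). reflexivity. Qed.

Lemma meet_compl_indep a b : meet a (c a) = meet b (c b).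
Proof.
  assert (Ha : a = meet (c (meet (c a) b)) (c (meet (c a) (c b)))).
  { rewrite <- compl_meet_split. symmetry. apply complK. }
  assert (Hb : b = meet (c (meet (c b) a)) (c (meet (c b) (c a)))).
  { rewrite <- compl_meet_split. symmetry. apply complK. }
  transitivity (meet (meet (c (meet (c a) b)) (c (meet (c a) (c b))))
                     (meet (c (meet a b)) (c (meet a (c b))))).
  { rewrite <- Ha, <- compl_meet_split. reflexivity. }
  transitivity (meet (meet (c (meet (c b) a)) (c (meet (c b) (c a))))
                     (meet (c (meet b a)) (c (meet b (c a))))).
  2: { rewrite <- Hb, <- compl_meet_split. reflexivity. }
  rewrite (meetC (c b) a), (meetC (c b) (c a)), (meetC b a), (meetC b (c a)).
  set (P := c (meet (c a) b)); set (Q := c (meet (c a) (c b))).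
  set (R := c (meet a b)); set (S := c (meet a (c b))).
  rewrite (meetC (meet S Q)), (meetC R P), (meetC S Q).
  apply meetACA.
Qed.

Section Bottom.

Variable o : B.
Hypothesis meet_compl : forall a, meet a (c a) = o.

Lemma compl_meetxx_top a : c a = meet (c (meet a a)) (c o).
Proof. rewrite (compl_meet_split a a), meet_compl. reflexivity. Qed.

Lemma meet_top_bot : meet (c o) o = o.
Proof. assert (H := meet_compl (c o)). rewrite complK in H. exact H. Qed.

Lemma meet_bot_bot : meet o o = o.
Proof.
  assert (Htop : meet (c (meet o o)) (c o) = c o).
  { symmetry. apply compl_meetxx_top. }
  assert (Hbot : meet (c (meet o o)) o = o).
  { transitivity (meet (c (meet o o)) (meet (c o) o)).
    { rewrite meet_top_bot. reflexivity. }
    rewrite meetA, Htop. apply meet_top_bot. }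
  rewrite <- (complK (meet o o)), (compl_meet_split (c (meet o o)) (c o)).
  rewrite Htop, complK, Hbot, meetC. apply meet_top_bot.
Qed.

Lemma meet_top_top : meet (c o) (c o) = c o.
Proof.
  assert (H := compl_meetxx_top o). rewrite meet_bot_bot in H.
  symmetry. exact H.
Qed.

Lemma meet_top a : meet a (c o) = a.
Proof.
  assert (Ha := compl_meetxx_top (c a)). rewrite complK in Ha.
  transitivity (meet (meet (c (meet (c a) (c a))) (c o)) (c o)).
  { rewrite <- Ha. reflexivity. }
  rewrite <- meetA, meet_top_top. symmetry. exact Ha.
Qed.

Lemma meetxx a : meet a a = a.
Proof.
  assert (Ha := compl_meetxx_top a). rewrite meet_top in Ha.
  rewrite <- (complK (meet a a)), <- Ha. apply complK.
Qed.

End Bottom.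

End MeetComplementAlgebra.

Theorem lemma2p8 (B : Type) (meet : B -> B -> B) (c : B -> B)
  (Hcomm : forall x y, meet x y = meet y x)
  (Hassoc : forall x y z, meet x (meet y z) = meet (meet x y) z)
  (Hinv : forall x, c (c x) = x)
  (Hax : forall x y, c x = meet (c (meet x y)) (c (meet x (c y)))) :
  forall x y z : B,
    meet (c (meet z (c z))) (c (meet (meet x y) (meet x y)))
    = c (meet y (meet x y)).
Proof.
  intros x y z.
  assert (Hbot : forall a, meet a (c a) = meet z (c z)).
  { intro a. exact (meet_compl_indep Hcomm Hassoc Hinv Hax a z). }
  assert (Hunit := meet_top Hcomm Hassoc Hinv Hax _ Hbot).
  assert (Hidem := meetxx Hcomm Hassoc Hinv Hax _ Hbot).
  rewrite Hcomm, Hunit, Hidem, Hassoc, (Hcomm y x), <- Hassoc, Hidem.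
  reflexivity.
Qed.
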